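(* Let $(\mathcal G,L,I)$ be a relational symplectic groupoid. Then $L_2:=L_3\circ(L_1\times Id)$ also satisfies $$L_2=L_3\circ(Id\times L_1).$$
   Context: Relations: for sets $A,B$, a relation $R:A\nrightarrow B$ is a subset $R\subset A\times B$. The composition of $R:A\nrightarrow B$ and $R':B\nrightarrow C$ is $R'\circ R=\{(a,c): \exists b,\ (a,b)\in R,\ (b,c)\in R'\}$. The transpose is $R^*=\{(b,a):(a,b)\in R\}$. Products $R_1\times R_2:A_1\times A_2\nrightarrow B_1\times B_2$ are taken componentwise. $*$ denotes a one-point set, and a relation $*\nrightarrow B$ is identified with a subset of $B$; in particular $L_1\times Id$ is the relation $\mathcal G\nrightarrow\mathcal G\times\mathcal G$ given by $\{(y,(l,y)):l\in L_1\}$, and $Id\times L_1$ is $\{(y,(y,l)):l\in L_1\}$. For a (possibly infinite-dimensional, weak) symplectic manifold $\mathcal M$, $\bar{\mathcal M}$ denotes $\mathcal M$ with the negated symplectic form. An immersed canonical relation $\mathcal M\nrightarrow\mathcal N$ is an immersed Lagrangian submanifold of $\bar{\mathcal M}\times\mathcal N$. A relational symplectic groupoid is a triple $(\mathcal G,L,I)$ consisting of: - a weak symplectic manifold $\mathcal G$ (the induced map $T\mathcal G\to T^*\mathcal G$ is injective); - an immersed Lagrangian submanifold $L\subset\mathcal G^3$; - an antisymplectomorphism $I:\mathcal G\to\mathcal G$. Notation: - $L_{rel}:\mathcal G\times\mathcal G\nrightarrow\bar{\mathcal G}$ is the subset $\{((x,y),z):(x,y,z)\in L\}$. - $I_{rel}:\bar{\mathcal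 G}\nrightarrow\mathcal G$ is the graph $\{(x,I(x))\}$. - $\overline{L_{rel}}:\bar{\mathcal G}\times\bar{\mathcal G}\nrightarrow\mathcal G$ and $\overline{I_{rel}}:\mathcal G\nrightarrow\bar{\mathcal G}$ are the same subsets regarded between the sign-reversed manifolds. - $T_{rel}$ and $\overline{T_{rel}}$ denote the graph of the transposition $(x,y)\mapsto(y,x)$ on $\mathcal G\times\mathcal G$, respectively on $\bar{\mathcal G}\times\bar{\mathcal G}$. - $Id$ denotes the graph of the identity. - $L_I:*\nrightarrow\mathcal G\times\mathcal G$ is the subset $\{(x,I(x)):x\in\mathcal G\}$. - $L_3:=I_{rel}\circ L_{rel}:\mathcal G\times\mathcal G\nrightarrow\mathcal G$, i.e. $L_3=\{((x,y),I(z)):(x,y,z)\in L\}$. Axioms: - (A.1) $L$ is cyclically symmetric: $(x,y,z)\in L\Rightarrow(y,z,x)\in L$. - (A.2) $I^2=\mathrm{id}$. - (A.3) $I_{rel}\circ L_{rel}=\overline{L_{rel}}\circ\overline{T_{rel}}\circ(\overline{I_{rel}}\times\overline{I_{rel}})$. - (A.4) $L_3\circ(L_3\times Id)=L_3\circ(Id\times L_3)$, and this is an immersed Lagrangian submanifold (as a relation $\mathcal G^3\nrightarrow\mathcal G$). - (A.5) $L_1:=L_3\circ L_I$ is an immersed Lagrangian submanifold of $\mathcal G$. - (A.6) $L_3\circ(L_1\times L_1)=L_1$. - (A.7) $L_2:=L_3\circ(L_1\times Id)$ is an immersed Lagrangian submanifold of $\bar{\mathcal G}\times\mathcal G$. 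*)

(* purely set-theoretic relations, geometric conditions abstract. *)
Set Implicit Arguments.

Definition rel (A B : Type) := A -> B -> Prop.

Definition rcomp {A B C : Type} (R' : rel B C) (R : rel A B) : rel A C :=
  fun a c => exists b, R a b /\ R' b c.

Definition rid (A : Type) : rel A A := fun a b => a = b.

Definition rprod {A1 A2 B1 B2 : Type} (R1 : rel A1 B1) (R2 : rel A2 B2)
  : rel (A1 * A2) (B1 * B2) :=
  fun a b => R1 (fst a) (fst b) /\ R2 (snd a) (snd b).

Definition rtransp {A : Type} : rel (A * A) (A * A) :=
  fun a b => b = (snd a, fst a).

Definition graph {A B : Type} (f : A -> B) : rel A B := fun a b => b = f a.

Section RSG.
Variables (G : Type) (L : G -> G -> G -> Prop) (I : G -> G).

Definition L_rel : rel (G * G) G := fun xy z => L (fst xy) (snd xy) z.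
Definition I_rel : rel G G := graph I.
Definition L3 : rel (G * G) G := rcomp I_rel L_rel.
Definition L_I : rel unit (G * G) := fun _ p => snd p = I (fst p).
Definition L1 : G -> Prop := fun w => rcomp L3 L_I tt w.
Definition L1xId : rel G (G * G) := fun y p => L1 (fst p) /\ snd p = y.
Definition IdxL1 : rel G (G * G) := fun y p => fst p = y /\ L1 (snd p).
Definition L2 : rel G G := rcomp L3 L1xId.
(* G^3 as (G * G) * G in the first composite, G * (G * G) in the second;
   we compare them via the canonical reassociation. *)
Definition assocL : rel ((G * G) * G) G := rcomp L3 (rprod L3 (@rid G)).
Definition assocR : rel (G * (G * G)) G := rcomp L3 (rprod (@rid G) L3).
End RSG.

Record GeomData (G : Type) := {
  weak_symplectic : Prop;
  imm_lag3 : (G -> G -> G -> Prop) -> Prop;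
  antisymplecto : (G -> G) -> Prop;
  imm_lag_rel3 : (G -> G -> G -> G -> Prop) -> Prop;      (* imm. Lagrangian relation G^3 -/-> G *)
  imm_lag1 : (G -> Prop) -> Prop;
  imm_lag2 : (G -> G -> Prop) -> Prop                     (* imm. Lagrangian in Gbar x G *)
}.

Definition RelSympGroupoid (G : Type) (D : GeomData G)
  (L : G -> G -> G -> Prop) (I : G -> G) : Prop :=
  weak_symplectic D /\ imm_lag3 D L /\ antisymplecto D I /\
  (forall x y z, L x y z -> L y z x) /\
  (forall x, I (I x) = x) /\
  (forall xy z, L3 L I xy z <->
               rcomp (L_rel L) (rcomp rtransp (rprod (I_rel I) (I_rel I))) xy z) /\
  (forall x y z w, assocL L I ((x, y), z) w <-> assocR L I (x, (y, z)) w) /\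
            imm_lag_rel3 D (fun x y z w => assocL L I ((x, y), z) w) /\
  imm_lag1 D (L1 L I) /\
  (forall w, rcomp (L3 L I) (fun (_ : unit) p => L1 L I (fst p) /\ L1 L I (snd p)) tt w
                <-> L1 L I w) /\
  imm_lag2 D (L2 L I).

From Stdlib Require Import Setoid.

(* Write [x * y ~> w] for [L3 (x, y) w], i.e. (x, y, I w) lies in L.  Only
   three axioms matter: cyclicity of L (A.1), I being an involution (A.2) and
   associativity of L3 (A.4).  From A.1 and A.2 we get the rotation rule
   [a * b ~> c  ==>  b * I c ~> I a]; associativity is rephrased pointwise as
   "(x * y) * z ~> w  iff  x * (y * z) ~> w".  The set L1 consists of all
   products x * I x.
   - If l = x * I x and l * y ~> z, reassociate to x * (I x * y) ~> z with
     I x * y ~> u; rotation gives y * I u ~> x, and reassociating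
     (y * I u) * u ~> z exhibits z as y * m with m = I u * u in L1.
   - Conversely, if m = x * I x and y * m ~> z, reassociate to
     (y * x) * I x ~> z with y * x ~> v; rotating twice gives I v * y ~> I x,
     and reassociating v * (I v * y) ~> z exhibits z as l * y with l in L1. *)

Section UnitsActOnBothSides.
Variables (G : Type) (L : G -> G -> G -> Prop) (I : G -> G).

Hypothesis L_cyclic : forall x y z, L x y z -> L y z x.
Hypothesis I_involutive : forall x, I (I x) = x.
Hypothesis L3_assoc_rel :
  forall x y z w, assocL L I ((x, y), z) w <-> assocR L I (x, (y, z)) w.

Lemma L3_rotate : forall a b c, L3 L I (a, b) c -> L3 L I (b, I c) (I a).
Proof.
  intros a b c [t [Habt Hc]]; unfold I_rel, graph in Hc; subst c.
  exists a; split; [| reflexivity].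
  unfold L_rel; simpl; rewrite I_involutive.
  apply L_cyclic; exact Habt.
Qed.

Lemma L3_assoc : forall x y z w,
  (exists u, L3 L I (x, y) u /\ L3 L I (u, z) w) <->
  (exists v, L3 L I (y, z) v /\ L3 L I (x, v) w).
Proof.
  intros x y z w; split.
  - intros [u [Hxy Huz]].
    destruct (proj1 (L3_assoc_rel x y z w)) as [[x' v] [[Hx Hyz] Hxv]].
    + exists (u, z); repeat split; assumption.
    + unfold rid in Hx; simpl in Hx, Hyz; subst x'; eauto.
  - intros [v [Hyz Hxv]].
    destruct (proj2 (L3_assoc_rel x y z w)) as [[u z'] [[Hxy Hz] Huz]].
    + exists (x, v); repeat split; assumption.
    + unfold rid in Hz; simpl in Hxy, Hz; subst z'; eauto.
Qed.

Lemma L1_iff : forall l, L1 L I l <-> exists x, L3 L I (x, I x) l.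
Proof.
  intro l; split.
  - intros [[x x'] [Hx Hl]]; unfold L_I in Hx; simpl in Hx; subst x'; eauto.
  - intros [x Hl]; exists (x, I x); split; [reflexivity | exact Hl].
Qed.

Lemma L2_iff : forall y z,
  L2 L I y z <-> exists l, L1 L I l /\ L3 L I (l, y) z.
Proof.
  intros y z; split.
  - intros [[l y'] [[Hl Hy] Hz]]; simpl in Hl, Hy; subst y'; eauto.
  - intros [l [Hl Hz]]; exists (l, y); repeat split; assumption.
Qed.

Lemma L3_IdxL1_iff : forall y z,
  rcomp (L3 L I) (IdxL1 L I) y z <-> exists m, L1 L I m /\ L3 L I (y, m) z.
Proof.
  intros y z; split.
  - intros [[y' m] [[Hy Hm] Hz]]; simpl in Hy, Hm; subst y'; eauto.
  - intros [m [Hm Hz]]; exists (y, m); repeat split; assumption.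
Qed.

Lemma left_unit_to_right_unit : forall y z,
  (exists l, L1 L I l /\ L3 L I (l, y) z) ->
  exists m, L1 L I m /\ L3 L I (y, m) z.
Proof.
  intros y z [l [Hl Hlyz]].
  destruct (proj1 (L1_iff l) Hl) as [x Hxl].
  destruct (proj1 (L3_assoc x (I x) y z)) as [u [Hixy Hxu]]; [eauto |].
  assert (Hyiu : L3 L I (y, I u) x).
  { pose proof (L3_rotate _ _ _ Hixy) as Hrot.
    rewrite I_involutive in Hrot; exact Hrot. }
  destruct (proj1 (L3_assoc y (I u) u z)) as [m [Hm Hymz]].
  { exists x; split; [exact Hyiu | exact Hxu]. }
  exists m; split; [| exact Hymz].
  apply L1_iff; exists (I u); rewrite I_involutive; exact Hm.
Qed.

Lemma right_unit_to_left_unit : forall y z,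
  (exists m, L1 L I m /\ L3 L I (y, m) z) ->
  exists l, L1 L I l /\ L3 L I (l, y) z.
Proof.
  intros y z [m [Hm Hymz]].
  destruct (proj1 (L1_iff m) Hm) as [x Hxm].
  destruct (proj2 (L3_assoc y x (I x) z)) as [v [Hyx Hvz]]; [eauto |].
  assert (Hvy : L3 L I (I v, y) (I x)).
  { pose proof (L3_rotate _ _ _ (L3_rotate _ _ _ Hyx)) as Hrot.
    rewrite I_involutive in Hrot; exact Hrot. }
  destruct (proj2 (L3_assoc v (I v) y z)) as [l [Hl Hlyz]].
  { exists (I x); split; [exact Hvy | exact Hvz]. }
  exists l; split; [apply L1_iff; eauto | exact Hlyz].
Qed.

End UnitsActOnBothSides.

Theorem mainTheorem3 (G : Type) (D : GeomData G)
  (L : G -> G -> G -> Prop) (I : G -> G) :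
  RelSympGroupoid D L I ->
  forall y z, L2 L I y z <-> rcomp (L3 L I) (IdxL1 L I) y z.
Proof.
  intros (_ & _ & _ & Hcyc & Hinv & _ & Hassoc & _) y z.
  rewrite L2_iff, L3_IdxL1_iff.
  split.
  - apply left_unit_to_right_unit; assumption.
  - apply right_unit_to_left_unit; assumption.
Qed.
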